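(* For each $\kappa\in[0,1]$, the problem (SMOP3) $$\min_{(g,h)}\ \tilde f_\kappa(g,h)=\kappa g+(1-\kappa)h\quad\text{subject to }(g,h)\in S,$$ where $$S=\Big\{(\hat g,\hat h)\in\mathbb R^2:\ \exists(\bar{\mathbf a},\mathbf s)\in\mathbb S \text{ with } \hat g=g(\bar{\mathbf a}),\ \hat h=h(\mathbf s),\ \text{and }\exists\,\mathbf z=(\mathbf z_1^\top,\dots,\mathbf z_{\mathcal I}^\top)^\top\in\mathbb D \text{ with } \bar{\mathbf a}=\tfrac1{\mathcal I}\textstyle\sum_{i=1}^{\mathcal I}\mathbf z_i\Big\},$$ has an optimal solution. For $\kappa\in(0,1)$ the optimal solution is unique.
   Context: Setting (a network of $\mathcal I\in\mathbb N$ residential energy systems with batteries). Fix an integer horizon $N\ge 2$, a time $k\in\mathbb N_0$, a step length $T>0$, and write $[m:n]=\{m,\dots,n\}$. For each $i\in[1:\mathcal I]$ the following are given: constants $\alpha_i,\beta_i,\gamma_i\in(0,1]$, a capacity $C_i\ge0$, bounds $\underline u_i<0<\bar u_i$, an initial state $x_i(k)\in[0,C_i]$, and data $w_i(n)\in\mathbb R$ for $n\in[k:k+N-1]$. Let $\mathbb U_i$ be the set of $(u^-,u^+)\in\mathbb R^2$ with $\underline u_i\le u^-\le0$, $0\le u^+\le\bar u_i$ and $0\le u^-/\underline u_i+u^+/\bar u_i\le1$. Let $\mathbb D_i\subset\mathbb R^N$ be the set of $\mathbf z_i=(z_i(k),\dots,z_i(k+N-1))^\top$ for which there exist $(u_i^-(n),u_i^+(n))\in\mathbb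 U_i$, $n\in[k:k+N-1]$, with $x_i(n+1)=\alpha_i x_i(n)+T(\beta_iu_i^+(n)+u_i^-(n))\in[0,C_i]$ and $z_i(n)=w_i(n)+u_i^+(n)+\gamma_iu_i^-(n)$ for all $n\in[k:k+N-1]$; let $\mathbb D=\mathbb D_1\times\dots\times\mathbb D_{\mathcal I}$. A reference vector $\bar\zeta\in\mathbb R^N$ and tube bounds $\underline{\mathbf c},\bar{\mathbf c}\in\mathbb R^N$ are given, and $$\mathbb S=\Big\{(\bar{\mathbf z},\mathbf s)\in\mathbb R^N\times\mathbb R^{2N}_{\ge0}:\ \begin{pmatrix}I\\-I\end{pmatrix}\bar{\mathbf z}-\mathbf s\le\begin{pmatrix}\bar{\mathbf c}\\-\underline{\mathbf c}\end{pmatrix}\Big\}.$$ The objective functions are $g(\bar{\mathbf z})=\frac1N\|\bar{\mathbf z}-\bar\zeta\|_2^2$ on $\mathbb R^N$ and $h(\mathbf s)=\|\mathbf s\|_2^2$ on $\mathbb R^{2N}_{\ge0}$. *)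

From HB Require Import structures.
From mathcomp Require Import all_boot all_order all_algebra.
From mathcomp Require Import reals.
Set Implicit Arguments. Unset Strict Implicit. Unset Printing Implicit Defensive.
Import Order.TTheory GRing.Theory Num.Theory.
Local Open Scope ring_scope.

Section Defs.
Variable R : realType.

Definition inU (ul ub um up : R) : Prop :=
  [/\ ul <= um <= 0, 0 <= up <= ub & 0 <= um / ul + up / ub <= 1].

(* D_i : the time step j : 'I_N stands for time n = k + j, state x j for x_i(k+j). *)
Definition inD (N : nat) (T alpha beta gamma C ul ub x0 : R) (w : 'I_N -> R)
    (z : 'cV[R]_N) : Prop :=
  exists (um up : 'I_N -> R) (x : nat -> R),
    x 0%N = x0 /\
    forall j : 'I_N,
      [/\ inU ul ub (um j) (up j),
          x j.+1 = alpha * x j + T * (beta * up j + um j),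
          0 <= x j.+1 <= C &
          z j ord0 = w j + up j + gamma * um j].

Definition inSS (N : nat) (cl cu : 'cV[R]_N) (zbar : 'cV[R]_N) (s : 'cV[R]_(N + N)) : Prop :=
  (forall r, 0 <= s r ord0) /\
  (forall r, (col_mx zbar (- zbar) - s) r ord0 <= (col_mx cu (- cl)) r ord0).

Definition gobj (N : nat) (zeta : 'cV[R]_N) (zbar : 'cV[R]_N) : R :=
  N%:R^-1 * \sum_(j < N) (zbar j ord0 - zeta j ord0) ^+ 2.

Definition hobj (M : nat) (s : 'cV[R]_M) : R := \sum_(r < M) s r ord0 ^+ 2.

Definition Sfeas (I N : nat) (T : R) (alpha beta gamma C ul ub x0 : 'I_I -> R)
    (w : 'I_I -> 'I_N -> R) (zeta cl cu : 'cV[R]_N) (p : R * R) : Prop :=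
  exists (abar : 'cV[R]_N) (s : 'cV[R]_(N + N)),
    [/\ inSS cl cu abar s, p.1 = gobj zeta abar, p.2 = hobj s &
        exists z : 'I_I -> 'cV[R]_N,
          (forall i, inD T (alpha i) (beta i) (gamma i) (C i) (ul i) (ub i) (x0 i) (w i) (z i))
          /\ abar = I%:R^-1 *: \sum_(i < I) z i].

Definition ftilde (kappa : R) (p : R * R) : R := kappa * p.1 + (1 - kappa) * p.2.

End Defs.

(* A point of the feasible set is determined by the charging and
   discharging controls of all systems together with a slack vector, and for
   fixed controls the best slack is max(0, .) of the tube violation, taken
   componentwise.  The resulting cost is a continuous function of the controls,
   which range over a compact set containing the zero control, so it attains
   its minimum there, and that minimum lies below every feasible cost.  The feasible (mean load, slack) pairs form a convex set, and
   by the parallelogram identity the cost at the midpoint of two such pairs is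
   their average cost minus (kappa |a1 - a2|^2 / N + (1 - kappa) |s1 - s2|^2) / 4.
   For 0 < kappa < 1 two minimizers therefore share load and slack. *)

From HB Require Import structures.
From mathcomp Require Import all_boot all_order all_algebra.
From mathcomp Require Import boolp classical_sets reals topology normedtype.
From mathcomp Require Import matrix_normedtype derive.
From mathcomp Require Import lra ring.
Set Implicit Arguments. Unset Strict Implicit. Unset Printing Implicit Defensive.
Import Order.TTheory GRing.Theory Num.Theory.
Import numFieldNormedType.Exports.
Local Open Scope classical_set_scope.
Local Open Scope ring_scope.

Section RealContinuity.
Context {X : topologicalType} {R : realType}.
Implicit Types f g : X -> R.

Lemma continuous_add f g : continuous f -> continuous g -> continuous (fun x => f x + g x).
Proof. by move=> cf cg x; exact: (continuousD (cf x) (cg x)). Qed.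

Lemma continuous_mul f g : continuous f -> continuous g -> continuous (fun x => f x * g x).
Proof. by move=> cf cg x; exact: (continuousM (cf x) (cg x)). Qed.

Lemma continuous_opp f : continuous f -> continuous (fun x => - f x).
Proof. by move=> cf x; exact: (continuousN (cf x)). Qed.

Lemma continuous_exp f n : continuous f -> continuous (fun x => f x ^+ n).
Proof.
move=> cf; elim: n => [|n IHn]; first exact: cst_continuous.
by under eq_fun do rewrite exprS; exact: continuous_mul.
Qed.

Lemma continuous_maxr f g :
  continuous f -> continuous g -> continuous (fun x => Num.max (f x) (g x)).
Proof. by move=> cf cg x; exact: (continuous_max (cf x) (cg x)). Qed.

Lemma continuous_sum (J : Type) (s : seq J) (F : J -> X -> R) :
  (forall j, continuous (F j)) -> continuous (fun x => \sum_(j <- s) F j x).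
Proof.
move=> cF; elim: s => [|j s IHs].
  by under eq_fun do rewrite big_nil; exact: cst_continuous.
by under eq_fun do rewrite big_cons; exact: continuous_add.
Qed.

Lemma closed_between f a b : continuous f -> closed [set x | a <= f x <= b].
Proof.
move=> cf; rewrite (_ : [set x | _] = f @^-1` `[a, b]).
  by apply: preimage_closed; [move=> x _; exact: cf | exact: itv_closed].
by apply/seteqP; split=> x /=; rewrite in_itv.
Qed.

End RealContinuity.

Section Objectives.
Variable R : realType.

Lemma hobj_ge0 M (s : 'cV[R]_M) : 0 <= hobj s.
Proof. by apply: sumr_ge0 => r _; exact: sqr_ge0. Qed.

Lemma hobj_eq0 M (s : 'cV[R]_M) : hobj s = 0 -> s = 0.
Proof.
move=> /eqP; rewrite psumr_eq0 => [/allP s0|r _]; last exact: sqr_ge0.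
apply/matrixP => r c; rewrite (ord1 c) mxE.
by apply/eqP; rewrite -sqrf_eq0; apply: s0; rewrite mem_index_enum.
Qed.

Lemma hobj_midpoint M (s t : 'cV[R]_M) :
  hobj (2^-1 *: (s + t)) = 2^-1 * (hobj s + hobj t) - 4^-1 * hobj (s - t).
Proof.
rewrite /hobj mulrDr !mulr_sumr -!big_split -sumrB; apply: eq_bigr => r _ /=.
by rewrite !mxE; field.
Qed.

Lemma gobjE N (zeta a : 'cV[R]_N) : gobj zeta a = N%:R^-1 * hobj (a - zeta).
Proof. by congr (_ * _); apply: eq_bigr => j _; rewrite !mxE. Qed.

Lemma gobj_midpoint N (zeta a b : 'cV[R]_N) :
  gobj zeta (2^-1 *: (a + b)) =
  2^-1 * (gobj zeta a + gobj zeta b) - 4^-1 * (N%:R^-1 * hobj (a - b)).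
Proof.
rewrite !gobjE.
have -> : 2^-1 *: (a + b) - zeta = 2^-1 *: ((a - zeta) + (b - zeta)).
  by apply/matrixP => i j; rewrite !mxE; field.
rewrite hobj_midpoint (_ : a - zeta - (b - zeta) = a - b); first by ring.
by rewrite opprB addrA subrK.
Qed.

End Objectives.

Section Slack.
Variables (R : realType) (N : nat) (cl cu : 'cV[R]_N).

Definition min_slack (a : 'cV[R]_N) : 'cV[R]_(N + N) :=
  map_mx (Num.max 0) (col_mx a (- a) - col_mx cu (- cl)).

Lemma inSS_min_slack a : inSS cl cu a (min_slack a).
Proof.
split=> r; rewrite /min_slack; move: (col_mx a _) (col_mx cu _) => A B.
  by rewrite mxE le_max lexx.
have : A r ord0 - B r ord0 <= Num.max 0 (A r ord0 - B r ord0) by rewrite le_max lexx orbT.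
by rewrite !mxE; lra.
Qed.

Lemma hobj_min_slack a s : inSS cl cu a s -> hobj (min_slack a) <= hobj s.
Proof.
move=> [s_ge0 s_feas]; apply: ler_sum => r _; move: (s_feas r) (s_ge0 r).
rewrite /min_slack; move: (col_mx a _) (col_mx cu _) => A B; rewrite !mxE => feas_r s_r_ge0.
by rewrite lerXn2r ?nnegrE ?le_max ?lexx // ge_max s_r_ge0; lra.
Qed.

Lemma inSS_midpoint a1 s1 a2 s2 :
  inSS cl cu a1 s1 -> inSS cl cu a2 s2 ->
  inSS cl cu (2^-1 *: (a1 + a2)) (2^-1 *: (s1 + s2)).
Proof.
move=> [s1_ge0 feas1] [s2_ge0 feas2]; split=> r.
  by rewrite !mxE; move: (s1_ge0 r) (s2_ge0 r) => *; lra.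
rewrite (_ : _ - _ = 2^-1 *: ((col_mx a1 (- a1) - s1) + (col_mx a2 (- a2) - s2))).
  by rewrite !mxE; move: (feas1 r) (feas2 r); rewrite !mxE => *; lra.
by rewrite [in RHS]addrACA -opprD add_col_mx -opprD scalerBr scale_col_mx scalerN.
Qed.

End Slack.

Section ObjectiveContinuity.
Variables (X : topologicalType) (R : realType) (N : nat) (zeta cl cu : 'cV[R]_N).
Variable a : X -> 'cV[R]_N.
Hypothesis ca : forall j, continuous (fun x => a x j ord0).

Lemma continuous_gobj : continuous (fun x => gobj zeta (a x)).
Proof.
apply: continuous_mul; first exact: cst_continuous.
apply: continuous_sum => j; apply: continuous_exp.
by apply: continuous_add => //; exact: cst_continuous.
Qed.

Lemma continuous_hobj_min_slack : continuous (fun x => hobj (min_slack cl cu (a x))).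
Proof.
apply: continuous_sum => r; apply: continuous_exp; rewrite /min_slack.
under eq_fun do rewrite !mxE.
apply: continuous_maxr; first exact: cst_continuous.
apply: continuous_add; last by exact: cst_continuous.
case: (split r) => j //.
rewrite (_ : (fun x => _) = fun x => - a x j ord0); last by apply/funext => x; rewrite mxE.
by apply: continuous_opp; exact: ca.
Qed.

End ObjectiveContinuity.

Section System.
Variables (R : realType) (N : nat) (T alpha beta gamma C ul ub x0 : R) (w : 'I_N -> R).

Definition zero_ext (f : 'I_N -> R) (k : nat) : R := if insub k is Some j then f j else 0.

Lemma zero_extE f (j : 'I_N) : zero_ext f j = f j.
Proof. by rewrite /zero_ext valK. Qed.

Fixpoint state (um up : nat -> R) (k : nat) : R :=
  if k is k'.+1 then alpha * state um up k' + T * (beta * up k' + um k') else x0.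

Definition admissible (um up : 'I_N -> R) : Prop :=
  forall j : 'I_N,
    inU ul ub (um j) (up j) /\ 0 <= state (zero_ext um) (zero_ext up) j.+1 <= C.

Definition load (um up : 'I_N -> R) : 'cV[R]_N := \col_j (w j + up j + gamma * um j).

Lemma inD_admissibleP z :
  inD T alpha beta gamma C ul ub x0 w z <->
  exists um up, admissible um up /\ z = load um up.
Proof.
split=> [[um [up [x [x_0 step]]]] | [um [up [adm ->]]]].
  have x_state k : (k <= N)%N -> x k = state (zero_ext um) (zero_ext up) k.
    elim: k => [|k IHk] k_le; first exact: x_0.
    have [_ -> _ _] := step (Ordinal k_le).
    by rewrite IHk ?(ltnW k_le) //= (zero_extE up (Ordinal k_le)) (zero_extE um (Ordinal k_le)).
  exists um, up; split=> [j|].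
    by have [? _ x_bd _] := step j; rewrite -x_state.
  by apply/matrixP => j c; rewrite (ord1 c) mxE; have [_ _ _ ->] := step j.
exists um, up, (state (zero_ext um) (zero_ext up)); split=> // j.
have [? ?] := adm j.
by split=> //=; rewrite ?zero_extE ?mxE.
Qed.

Lemma admissible0 :
  0 <= alpha <= 1 -> ul <= 0 <= ub -> 0 <= x0 <= C -> admissible (fun=> 0) (fun=> 0).
Proof.
move=> /andP[alpha_ge0 alpha_le1] /andP[ul_le0 ub_ge0] /andP[x0_ge0 x0_leC].
have zero_ext0 k : zero_ext (fun=> 0) k = 0 by rewrite /zero_ext; case: insub.
have state_bd k : 0 <= state (zero_ext (fun=> 0)) (zero_ext (fun=> 0)) k <= C.
  elim: k => [|k /andP[IH0 IH1]] /=; first by apply/andP.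
  rewrite /= !zero_ext0 !mulr0 !addr0 mulr0 addr0 mulr_ge0 //=.
  by apply: le_trans IH1; rewrite ler_piMl.
move=> j; split; last exact: state_bd.
by rewrite /inU !mul0r addr0 lexx ul_le0 ub_ge0 ler01.
Qed.

Lemma inU_midpoint um1 up1 um2 up2 :
  inU ul ub um1 up1 -> inU ul ub um2 up2 ->
  inU ul ub (2^-1 * (um1 + um2)) (2^-1 * (up1 + up2)).
Proof.
move=> [/andP[? ?] /andP[? ?] /andP[? ?]] [/andP[? ?] /andP[? ?] /andP[? ?]].
have mid_div x y d : 2^-1 * (x + y) / d = 2^-1 * (x / d + y / d).
  by rewrite -mulrA mulrDl.
by rewrite /inU !mid_div; split; apply/andP; split; lra.
Qed.

Lemma inD_midpoint z1 z2 :
  inD T alpha beta gamma C ul ub x0 w z1 -> inD T alpha beta gamma C ul ub x0 w z2 ->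
  inD T alpha beta gamma C ul ub x0 w (2^-1 *: (z1 + z2)).
Proof.
move=> [um1 [up1 [x1 [x1_0 step1]]]] [um2 [up2 [x2 [x2_0 step2]]]].
exists (fun j => 2^-1 * (um1 j + um2 j)), (fun j => 2^-1 * (up1 j + up2 j)),
  (fun k => 2^-1 * (x1 k + x2 k)).
split=> [|j]; first by rewrite x1_0 x2_0; field.
have [U1 -> /andP[? ?] z1_j] := step1 j; have [U2 -> /andP[? ?] z2_j] := step2 j.
split.
- exact: inU_midpoint.
- by field.
- by apply/andP; split; lra.
- by rewrite !mxE z1_j z2_j; field.
Qed.

Variable X : topologicalType.

Lemma continuous_zero_ext (f : X -> 'I_N -> R) k :
  (forall j, continuous (f ^~ j)) -> continuous (fun x => zero_ext (f x) k).
Proof. by move=> cf; rewrite /zero_ext; case: insub => [j|]; [exact: cf | exact: cst_continuous]. Qed.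

Lemma continuous_state (um up : X -> nat -> R) k :
  (forall k, continuous (um ^~ k)) -> (forall k, continuous (up ^~ k)) ->
  continuous (fun x => state (um x) (up x) k).
Proof.
move=> cum cup; elim: k => [|k IHk] /=; first exact: cst_continuous.
have cst (c : R) : continuous (fun _ : X => c) by exact: cst_continuous.
apply: continuous_add; first exact: continuous_mul.
by apply: continuous_mul => //; apply: continuous_add => //; exact: continuous_mul.
Qed.

Lemma closed_admissible (um up : X -> 'I_N -> R) :
  (forall j, continuous (um ^~ j)) -> (forall j, continuous (up ^~ j)) ->
  closed [set x | admissible (um x) (up x)].
Proof.
move=> cum cup.
pose ratio_sum j x := um x j / ul + up x j / ub.
pose next_state j x := state (zero_ext (um x)) (zero_ext (up x)) j.+1.
rewrite (_ : [set x | _] = \bigcap_(j in setT)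
    ([set x | ul <= um x j <= 0] `&` [set x | 0 <= up x j <= ub] `&`
     [set x | 0 <= ratio_sum j x <= 1] `&` [set x | 0 <= next_state j x <= C])).
  apply: closed_bigI => j _; do 3?apply: closedI; apply: closed_between => //.
    by apply: continuous_add; apply: continuous_mul => //; exact: cst_continuous.
  by apply: continuous_state => k; exact: continuous_zero_ext.
apply/seteqP; split=> x /= => [adm j _ | adm j].
  by have [[? ? ?] ?] := adm j.
by have [[[? ?] ?] ?] := adm j I.
Qed.

End System.

Section Network.
Variables (R : realType) (I N : nat) (T : R) (alpha beta gamma C ul ub x0 : 'I_I -> R)
  (w : 'I_I -> 'I_N -> R) (zeta cl cu : 'cV[R]_N) (kappa : R).

Local Notation inD_ i := (inD T (alpha i) (beta i) (gamma i) (C i) (ul i) (ub i) (x0 i) (w i)).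
Local Notation admissible_ i := (admissible T (alpha i) (beta i) (C i) (ul i) (ub i) (x0 i)).
Local Notation load_ i := (load (gamma i) (w i)).
Local Notation S := (Sfeas T alpha beta gamma C ul ub x0 w zeta cl cu).

Definition feasible_pair (a : 'cV[R]_N) (s : 'cV[R]_(N + N)) : Prop :=
  inSS cl cu a s /\
  exists z : 'I_I -> 'cV[R]_N, (forall i, inD_ i (z i)) /\ a = I%:R^-1 *: \sum_i z i.

Lemma SfeasP p : S p <-> exists a s, feasible_pair a s /\ p = (gobj zeta a, hobj s).
Proof.
split=> [|[a [s [[SS_as Z] ->]]]]; last by exists a, s.
by case: p => g h [a [s [SS_as /= -> -> Z]]]; exists a, s.
Qed.

Lemma feasible_pair_midpoint a1 s1 a2 s2 :
  feasible_pair a1 s1 -> feasible_pair a2 s2 ->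
  feasible_pair (2^-1 *: (a1 + a2)) (2^-1 *: (s1 + s2)).
Proof.
move=> [SS1 [z1 [D1 a1E]]] [SS2 [z2 [D2 a2E]]]; split; first exact: inSS_midpoint.
exists (fun i => 2^-1 *: (z1 i + z2 i)); split=> [i|]; first exact: inD_midpoint.
by rewrite a1E a2E -scalerDr -scaler_sumr big_split /= !scalerA mulrC.
Qed.

Lemma Sfeas_min_unique p q : (0 < N)%N -> 0 < kappa < 1 ->
  S p -> (forall r, S r -> ftilde kappa p <= ftilde kappa r) ->
  S q -> (forall r, S r -> ftilde kappa q <= ftilde kappa r) -> p = q.
Proof.
move=> N_gt0 /andP[k_gt0 k_lt1] Sp p_min Sq q_min.
have le_pq := p_min q Sq; have le_qp := q_min p Sp.
move: Sp Sq p_min le_pq le_qp => /SfeasP[a1 [s1 [F1 ->]]] /SfeasP[a2 [s2 [F2 ->]]] p_min.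
have Smid : S (gobj zeta (2^-1 *: (a1 + a2)), hobj (2^-1 *: (s1 + s2))).
  by apply/SfeasP; do 2!eexists; split; first exact: feasible_pair_midpoint F1 F2.
have := p_min _ Smid; rewrite /ftilde /= gobj_midpoint hobj_midpoint.
have da_ge0 : 0 <= kappa * (N%:R^-1 * hobj (a1 - a2)).
  by rewrite !mulr_ge0 ?hobj_ge0 ?invr_ge0 ?ler0n ?ltW.
have ds_ge0 : 0 <= (1 - kappa) * hobj (s1 - s2) by rewrite mulr_ge0 ?hobj_ge0 ?subr_ge0 ?ltW.
move=> le_pmid le_pq le_qp.
have /eqP : kappa * (N%:R^-1 * hobj (a1 - a2)) = 0 by lra.
have /eqP : (1 - kappa) * hobj (s1 - s2) = 0 by lra.
rewrite !mulf_eq0 subr_eq0 invr_eq0 pnatr_eq0 (gtn_eqF N_gt0) (gt_eqF k_gt0) (gt_eqF k_lt1) /=.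
by move=> /eqP/hobj_eq0/subr0_eq -> /eqP/hobj_eq0/subr0_eq ->.
Qed.

Definition control_index := ('I_I * 'I_N * bool)%type.
Local Notation V := 'rV[R]_#|{: control_index}|.

(* Coordinate (i, j, false) of a control vector is u_i^-(k+j) and (i, j, true) is u_i^+(k+j). *)
Definition control (v : V) (b : bool) (i : 'I_I) (j : 'I_N) : R :=
  v ord0 (enum_rank ((i, j, b) : control_index)).

Definition pack (um up : 'I_I -> 'I_N -> R) : V :=
  \row_k let: (i, j, b) := enum_val k in if b then up i j else um i j.

Lemma control_pack um up b i : control (pack um up) b i = if b then up i else um i.
Proof. by apply/funext => j; rewrite /control mxE enum_rankK; case: b. Qed.

Definition admissible_controls : set V :=
  [set v | forall i, admissible_ i (control v false i) (control v true i)].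

Definition mean_load (v : V) : 'cV[R]_N :=
  I%:R^-1 *: \sum_i load_ i (control v false i) (control v true i).

Definition control_cost (v : V) : R :=
  ftilde kappa (gobj zeta (mean_load v), hobj (min_slack cl cu (mean_load v))).

Lemma continuous_control b i j : continuous (fun v : V => control v b i j).
Proof. exact: coord_continuous. Qed.

Lemma compact_admissible_controls : compact admissible_controls.
Proof.
pose box (k : 'I_#|{: control_index}|) : set R :=
  let: (i, _, b) := enum_val k in if b then `[0, ub i]%classic else `[ul i, 0]%classic.
apply: (subclosed_compact _ (rV_compact (A := box) _)).
- rewrite (_ : admissible_controls = \bigcap_(i in setT)
      [set v | admissible_ i (control v false i) (control v true i)]).
    by apply: closed_bigI => i _; apply: closed_admissible => j; exact: continuous_control.
  by apply/seteqP; split=> v adm i => [_|]; exact: adm.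
- by move=> k; rewrite /box; case: enum_val => [[i j] []]; exact: segment_compact.
move=> v adm k; rewrite /box -[k in v ord0 k]enum_valK.
case: enum_val => [[i j] b]; have [[/andP[? ?] /andP[? ?] _] _] := adm i j.
by case: b; rewrite /= in_itv /=; apply/andP.
Qed.

Lemma admissible_controls0 :
  (forall i, 0 <= alpha i <= 1) -> (forall i, ul i <= 0 <= ub i) ->
  (forall i, 0 <= x0 i <= C i) -> admissible_controls 0.
Proof.
move=> alpha_bd u_bd x0_bd i.
have control0 b : control 0 b i = fun=> 0 by apply/funext => j; rewrite /control mxE.
by rewrite !control0; exact: admissible0.
Qed.

Lemma mean_loadE v j : mean_load v j ord0 =
  I%:R^-1 * \sum_i (w i j + control v true i j + gamma i * control v false i j).
Proof. by rewrite !mxE summxE; congr (_ * _); apply: eq_bigr => i _; rewrite mxE. Qed.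

Lemma continuous_control_cost : continuous control_cost.
Proof.
have cst (c : R) : continuous (fun _ : V => c) by exact: cst_continuous.
have c_mean j : continuous (fun v => mean_load v j ord0).
  under eq_fun do rewrite mean_loadE.
  apply: continuous_mul => //; apply: continuous_sum => i.
  by do 2?apply: continuous_add => //; try apply: continuous_mul => //; exact: continuous_control.
rewrite /control_cost /ftilde /=.
by apply: continuous_add; apply: continuous_mul => //;
  [exact: continuous_gobj | exact: continuous_hobj_min_slack].
Qed.

Lemma Sfeas_control_cost v : admissible_controls v ->
  S (gobj zeta (mean_load v), hobj (min_slack cl cu (mean_load v))).
Proof.
move=> adm; apply/SfeasP; do 2!eexists; split=> //; split; first exact: inSS_min_slack.
exists (fun i => load_ i (control v false i) (control v true i)); split=> // i.
by apply/inD_admissibleP; do 2!eexists; split; first exact: adm.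
Qed.

Lemma control_cost_le p : kappa <= 1 -> S p ->
  exists2 v, admissible_controls v & control_cost v <= ftilde kappa p.
Proof.
move=> k_le1 /SfeasP[a [s [[SS_as [z [Dz aE]]] ->]]].
have /choice[um /choice[up ctrl]] :
    forall i, exists um up, admissible_ i um up /\ z i = load_ i um up.
  by move=> i; apply/inD_admissibleP.
exists (pack um up) => [i|]; first by rewrite !control_pack; have [] := ctrl i.
rewrite /control_cost; have -> : mean_load (pack um up) = a.
  by rewrite aE; congr (_ *: _); apply: eq_bigr => i _; rewrite !control_pack; have [_ ->] := ctrl i.
rewrite /ftilde /= lerD2l ler_wpM2l ?subr_ge0 //.
exact: hobj_min_slack.
Qed.

Lemma exists_Sfeas_min :
  (forall i, 0 <= alpha i <= 1) -> (forall i, ul i <= 0 <= ub i) ->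
  (forall i, 0 <= x0 i <= C i) -> kappa <= 1 ->
  exists p, S p /\ forall q, S q -> ftilde kappa p <= ftilde kappa q.
Proof.
move=> alpha_bd u_bd x0_bd k_le1.
have [v /set_mem adm_v v_min] := compact_EVT_min
  (ex_intro _ 0 (admissible_controls0 alpha_bd u_bd x0_bd)) compact_admissible_controls
  (continuous_subspaceT continuous_control_cost).
exists (gobj zeta (mean_load v), hobj (min_slack cl cu (mean_load v))).
split=> [|q /(control_cost_le k_le1)[v' adm_v' le_v']]; first exact: Sfeas_control_cost.
exact: le_trans (v_min _ (mem_set adm_v')) le_v'.
Qed.

End Network.

Theorem corollary2 (R : realType) (I N : nat) (T : R)
    (alpha beta gamma C ul ub x0 : 'I_I -> R) (w : 'I_I -> 'I_N -> R)
    (zeta cl cu : 'cV[R]_N) (kappa : R) :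
  (0 < I)%N -> (2 <= N)%N -> 0 < T ->
  (forall i, 0 < alpha i <= 1) -> (forall i, 0 < beta i <= 1) ->
  (forall i, 0 < gamma i <= 1) -> (forall i, 0 <= C i) ->
  (forall i, ul i < 0 < ub i) -> (forall i, 0 <= x0 i <= C i) ->
  0 <= kappa <= 1 ->
  (exists p, Sfeas T alpha beta gamma C ul ub x0 w zeta cl cu p /\
     forall q, Sfeas T alpha beta gamma C ul ub x0 w zeta cl cu q ->
       ftilde kappa p <= ftilde kappa q) /\
  (0 < kappa < 1 ->
   forall p q,
     (Sfeas T alpha beta gamma C ul ub x0 w zeta cl cu p /\
      forall r, Sfeas T alpha beta gamma C ul ub x0 w zeta cl cu r ->
        ftilde kappa p <= ftilde kappa r) ->
     (Sfeas T alpha beta gamma C ul ub x0 w zeta cl cu q /\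
      forall r, Sfeas T alpha beta gamma C ul ub x0 w zeta cl cu r ->
        ftilde kappa q <= ftilde kappa r) ->
     p = q).
Proof.
move=> _ N_ge2 _ alpha_bd _ _ _ u_bd x0_bd /andP[_ k_le1]; split.
  apply: exists_Sfeas_min => // i.
    by have /andP[/ltW -> ->] := alpha_bd i.
  by have /andP[/ltW -> /ltW ->] := u_bd i.
move=> k_bd p q [Sp p_min] [Sq q_min].
by apply: Sfeas_min_unique Sp p_min Sq q_min => //; exact: leq_trans N_ge2.
Qed.
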